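(* There exists a constant $C$ (independent of $N$ and $t$) such that, for the processes $x^t$ and $\overline{x}^t$ described in the context, $$\mathbb{E}\big(|\overline{x}^t-x^t|^2\big)\le C N^{-1}\quad\text{for all } t\ge 0.$$
   Context: Two patches have hosting capacities $N_1=N$ and $N_2=dN$, with $d=N_2/N_1\in(0,1]$ fixed; $\kappa>0$ fixed, $\delta t=1/N$, $\kappa\delta t\le 1$. Let $M=\begin{pmatrix} d & -d\\ -1 & 1\end{pmatrix}$ and $A=\mathrm{Id}-\frac{\kappa}{N}M$. For a function $g$ on $\mathcal D=[0,1]^2$ define $$B_N(g)(x)=\sum_{j_1=0}^{N_1}\sum_{j_2=0}^{N_2}\binom{N_1}{j_1}\binom{N_2}{j_2}x_1^{j_1}(1-x_1)^{N_1-j_1}x_2^{j_2}(1-x_2)^{N_2-j_2}\,g\!\left(\tfrac{j_1}{N_1},\tfrac{j_2}{N_2}\right).$$ $(x^n)_{n\ge0}$ is the Markov chain in $\mathcal D$ with transition kernel $\mathbb{E}(f(x^{n+1})\mid x^n=x)=B_N(f\circ A)(x)$. The càdlàg process is $\overline{x}^t=x^n$ for $n\delta t\le t<(n+1)\delta t$, and $x^t$ is the continuous piecewise linear-in-time process with $x^t=x^n$ at $t=n\delta t$. $|\cdot|$ is the Euclidean norm. *)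

From Stdlib Require Import Reals.
Open Scope R_scope.

Definition pt := (R * R)%type.

Definition sqnorm (v : pt) : R := fst v ^ 2 + snd v ^ 2.

(* A = Id - (kappa/N) M,  M = [[d,-d],[-1,1]] *)
Definition Amap (kappa d : R) (N : nat) (y : pt) : pt :=
  (fst y - kappa / INR N * (d * fst y - d * snd y),
   snd y - kappa / INR N * (- fst y + snd y)).

Definition bern (n j : nat) (x : R) : R := C n j * x ^ j * (1 - x) ^ (n - j).

(* B_N(g)(x), with N1 = hosting capacity of patch 1, N2 of patch 2;
   sum_f_R0 f n = f 0 + ... + f n *)
Definition BN (N1 N2 : nat) (g : pt -> R) (x : pt) : R :=
  sum_f_R0 (fun j1 =>
    sum_f_R0 (fun j2 =>
      bern N1 j1 (fst x) * bern N2 j2 (snd x) * g (INR j1 / INR N1, INR j2 / INR N2))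
    N2) N1.

(* transition operator: E(f(x^{n+1}) | x^n = x) = B_N(f o A)(x) *)
Definition kernel (kappa d : R) (N N2 : nat) (f : pt -> R) (x : pt) : R :=
  BN N N2 (fun y => f (Amap kappa d N y)) x.

Definition pcons (x0 : pt) (p : nat -> pt) : nat -> pt :=
  fun i => match i with O => x0 | S i' => p i' end.

(* Epath K k F x0 = expectation of F(path) for the Markov chain with transition
   operator K started at x^0 = x0, where the path is (x^0, ..., x^k, x^k, x^k, ...)
   (so F should only depend on the first k+1 coordinates). *)
Fixpoint Epath (K : (pt -> R) -> pt -> R) (k : nat) (F : (nat -> pt) -> R) (x0 : pt) : R :=
  match k with
  | O => F (fun _ => x0)
  | S k' => K (fun y => Epath K k' (fun p => F (pcons x0 p)) y) x0
  end.

(* the index n with n dt <= t < (n+1) dt, dt = 1/N  (for t >= 0) *)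
Definition nstep (N : nat) (t : R) : nat := Z.to_nat (Int_part (t * INR N)).

Definition xbar (N : nat) (p : nat -> pt) (t : R) : pt := p (nstep N t).

Definition xlin (N : nat) (p : nat -> pt) (t : R) : pt :=
  let n := nstep N t in
  let s := (t - INR n / INR N) * INR N in
  (fst (p n) + s * (fst (p (S n)) - fst (p n)),
   snd (p n) + s * (snd (p (S n)) - snd (p n))).

From Stdlib Require Import Reals ZArith Lra Lia.
Open Scope R_scope.

(* Since [x^t] interpolates linearly between [x^n] and [x^(n+1)] on
   [[n dt, (n+1) dt]], the gap [xbar^t - x^t] is a fraction of the increment
   [x^(n+1) - x^n]; so it suffices to bound the second moment of one step of the
   chain uniformly over its starting point in [D]. A step first resamples each
   coordinate binomially, with variance [x_i (1 - x_i) / N_i <= 1 / (4 N_i)],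
   and then applies [A], which moves a point of [D] by [O(kappa / N)] and maps
   [D] into itself. Hence [E |x^(n+1) - x^n|^2 <= C / N] given any [x^n] in [D],
   and the bound survives the expectation over the earlier steps. *)

Definition psub (a b : pt) : pt := (fst a - fst b, snd a - snd b).

Definition lerp (s : R) (a b : pt) : pt :=
  (fst a + s * (fst b - fst a), snd a + s * (snd b - snd a)).

Definition in_unit_square (y : pt) : Prop := 0 <= fst y <= 1 /\ 0 <= snd y <= 1.

Lemma sum_f_R0_lin (a b : R) (f g : nat -> R) (n : nat) :
  sum_f_R0 (fun i => a * f i + b * g i) n = a * sum_f_R0 f n + b * sum_f_R0 g n.
Proof.
  rewrite plus_sum, !scal_sum.
  f_equal; apply sum_eq; intros; ring.
Qed.

Lemma C_n_n (n : nat) : C n n = 1.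
Proof. unfold C. rewrite Nat.sub_diag. simpl. field. apply INR_fact_neq_0. Qed.

Lemma C_n_0 (n : nat) : C n 0 = 1.
Proof. rewrite pascal_step1, Nat.sub_0_r by lia. apply C_n_n. Qed.

Lemma C_ge_0 (n k : nat) : 0 <= C n k.
Proof.
  unfold C. apply Rlt_le, Rdiv_lt_0_compat; [apply INR_fact_lt_0 |].
  apply Rmult_lt_0_compat; apply INR_fact_lt_0.
Qed.

Lemma bern_ge_0 (n j : nat) (x : R) : 0 <= x <= 1 -> 0 <= bern n j x.
Proof.
  intros Hx. unfold bern.
  apply Rmult_le_pos; [apply Rmult_le_pos |]; [apply C_ge_0 | apply pow_le; lra ..].
Qed.

Definition binom_expect (n : nat) (f : nat -> R) (x : R) : R :=
  sum_f_R0 (fun j => bern n j x * f j) n.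

Lemma binom_expect_ext (n : nat) (f g : nat -> R) (x : R) :
  (forall j, (j <= n)%nat -> f j = g j) -> binom_expect n f x = binom_expect n g x.
Proof. intros Hfg. apply sum_eq. intros j Hj. rewrite Hfg by exact Hj. reflexivity. Qed.

Lemma binom_expect_lin (n : nat) (a b : R) (f g : nat -> R) (x : R) :
  binom_expect n (fun j => a * f j + b * g j) x
  = a * binom_expect n f x + b * binom_expect n g x.
Proof. unfold binom_expect. rewrite <- sum_f_R0_lin. apply sum_eq. intros; ring. Qed.

Lemma binom_expect_const (n : nat) (c x : R) : binom_expect n (fun _ => c) x = c.
Proof.
  transitivity (c * (x + (1 - x)) ^ n).
  - rewrite binomial, scal_sum. reflexivity.
  - rewrite Rplus_minus, pow1. ring.
Qed.

(* [bern n j x] does not vanish for [j > n] (the truncated subtraction in [C n j]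
   makes it [n! / j! * x^j]); the cut-off makes Pascal's rule hold for every [j]. *)
Definition bern_cut (n j : nat) (x : R) : R := if (j <=? n)%nat then bern n j x else 0.

Lemma bern_cut_S_0 (n : nat) (x : R) : bern_cut (S n) 0 x = (1 - x) * bern_cut n 0 x.
Proof. unfold bern_cut, bern. simpl. rewrite !C_n_0, Nat.sub_0_r. ring. Qed.

Lemma bern_cut_S_S (n j : nat) (x : R) :
  bern_cut (S n) (S j) x = x * bern_cut n j x + (1 - x) * bern_cut n (S j) x.
Proof.
  unfold bern_cut. destruct (Nat.lt_total j n) as [Hlt | [<- | Hgt]].
  - rewrite !(proj2 (Nat.leb_le _ _)) by lia.
    unfold bern. rewrite <- pascal by exact Hlt.
    replace (S n - S j)%nat with (S (n - S j)) by lia.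
    replace (n - j)%nat with (S (n - S j)) by lia. simpl. ring.
  - rewrite (proj2 (Nat.leb_le (S j) (S j))), (proj2 (Nat.leb_le j j)),
      (proj2 (Nat.leb_gt (S j) j)) by lia.
    unfold bern. rewrite !C_n_n, !Nat.sub_diag. simpl. ring.
  - rewrite (proj2 (Nat.leb_gt (S j) (S n))), (proj2 (Nat.leb_gt j n)),
      (proj2 (Nat.leb_gt (S j) n)) by lia.
    ring.
Qed.

Lemma sum_bern_cut (n M : nat) (f : nat -> R) (x : R) : (n <= M)%nat ->
  sum_f_R0 (fun j => bern_cut n j x * f j) M = binom_expect n f x.
Proof.
  induction 1 as [| M HnM IH].
  - apply sum_eq. intros j Hj. unfold bern_cut.
    rewrite (proj2 (Nat.leb_le j n)) by exact Hj. reflexivity.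
  - rewrite tech5, IH. unfold bern_cut.
    rewrite (proj2 (Nat.leb_gt (S M) n)) by lia. ring.
Qed.

Lemma binom_expect_S (n : nat) (f : nat -> R) (x : R) :
  binom_expect (S n) f x
  = x * binom_expect n (fun j => f (S j)) x + (1 - x) * binom_expect n f x.
Proof.
  rewrite <- (sum_bern_cut (S n) (S n)), <- (sum_bern_cut n n (fun j => f (S j))),
    <- (sum_bern_cut n (S n) f) by lia.
  rewrite !(decomp_sum _ (S n)) by lia. simpl pred.
  rewrite (sum_eq _ (fun i => x * (bern_cut n i x * f (S i))
                              + (1 - x) * (bern_cut n (S i) x * f (S i))))
    by (intros; rewrite bern_cut_S_S; ring).
  rewrite sum_f_R0_lin, bern_cut_S_0. ring.
Qed.

Lemma binom_expect_id (n : nat) (x : R) : binom_expect n INR x = INR n * x.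
Proof.
  induction n as [| n IH].
  - unfold binom_expect. simpl. ring.
  - rewrite binom_expect_S, IH,
      (binom_expect_ext n _ (fun j => 1 * INR j + 1 * 1)) by (intros; rewrite S_INR; ring).
    rewrite binom_expect_lin, IH, binom_expect_const, S_INR. ring.
Qed.

Lemma binom_expect_sq (n : nat) (x : R) :
  binom_expect n (fun j => INR j ^ 2) x = INR n * (INR n - 1) * x ^ 2 + INR n * x.
Proof.
  induction n as [| n IH].
  - unfold binom_expect. simpl. ring.
  - rewrite binom_expect_S, IH,
      (binom_expect_ext n _ (fun j => 1 * INR j ^ 2 + 1 * (2 * INR j + 1 * 1)))
      by (intros; rewrite S_INR; ring).
    rewrite !binom_expect_lin, IH, binom_expect_id, binom_expect_const, S_INR. ring.
Qed.

Lemma binom_expect_var (n : nat) (x : R) : (1 <= n)%nat ->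
  binom_expect n (fun j => (INR j / INR n - x) ^ 2) x = x * (1 - x) / INR n.
Proof.
  intros Hn. assert (HnR : INR n <> 0) by (apply not_0_INR; lia).
  rewrite (binom_expect_ext n _
    (fun j => / INR n ^ 2 * INR j ^ 2 + 1 * (- 2 * x / INR n * INR j + x ^ 2 * 1)))
    by (intros; field; exact HnR).
  rewrite !binom_expect_lin, binom_expect_sq, binom_expect_id, binom_expect_const.
  field. exact HnR.
Qed.

Lemma BN_lin (N1 N2 : nat) (a b : R) (g h : pt -> R) (x : pt) :
  BN N1 N2 (fun y => a * g y + b * h y) x = a * BN N1 N2 g x + b * BN N1 N2 h x.
Proof.
  unfold BN. rewrite <- sum_f_R0_lin. apply sum_eq. intros j1 _.
  rewrite <- sum_f_R0_lin. apply sum_eq. intros j2 _. ring.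
Qed.

Lemma BN_sep (N1 N2 : nat) (p1 p2 : R -> R) (x : pt) :
  BN N1 N2 (fun y => p1 (fst y) + p2 (snd y)) x
  = binom_expect N1 (fun j => p1 (INR j / INR N1)) (fst x)
    + binom_expect N2 (fun j => p2 (INR j / INR N2)) (snd x).
Proof.
  set (E2 := binom_expect N2 (fun j => p2 (INR j / INR N2)) (snd x)).
  transitivity (binom_expect N1 (fun j => 1 * p1 (INR j / INR N1) + E2 * 1) (fst x)).
  - apply sum_eq. intros j1 _. simpl.
    transitivity (bern N1 j1 (fst x) *
      binom_expect N2 (fun j => p1 (INR j1 / INR N1) * 1 + 1 * p2 (INR j / INR N2)) (snd x)).
    + unfold binom_expect. rewrite scal_sum. apply sum_eq. intros; ring.
    + rewrite binom_expect_lin, binom_expect_const. unfold E2. ring.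
  - rewrite binom_expect_lin, !binom_expect_const. ring.
Qed.

Lemma BN_const (N1 N2 : nat) (c : R) (x : pt) : BN N1 N2 (fun _ => c) x = c.
Proof.
  pose proof (BN_sep N1 N2 (fun _ => c) (fun _ => 0) x) as Hsep. cbv beta in Hsep.
  rewrite Rplus_0_r, !binom_expect_const, Rplus_0_r in Hsep. exact Hsep.
Qed.

Lemma BN_sqdist (N1 N2 : nat) (x : pt) : (1 <= N1)%nat -> (1 <= N2)%nat ->
  BN N1 N2 (fun y => sqnorm (psub y x)) x
  = fst x * (1 - fst x) / INR N1 + snd x * (1 - snd x) / INR N2.
Proof.
  intros H1 H2.
  etransitivity; [apply (BN_sep N1 N2 (fun r => (r - fst x) ^ 2) (fun r => (r - snd x) ^ 2)) |].
  rewrite !binom_expect_var by assumption. reflexivity.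
Qed.

Lemma div_nat_in_unit_interval (j n : nat) : (j <= n)%nat -> 0 <= INR j / INR n <= 1.
Proof.
  intros Hj. destruct (Nat.eq_dec n 0) as [-> | Hn].
  - replace j with O by lia. unfold Rdiv. simpl. lra.
  - assert (0 < INR n) by (apply lt_0_INR; lia).
    apply le_INR in Hj. pose proof (pos_INR j).
    unfold Rdiv. split.
    + apply Rmult_le_pos; [lra | apply Rlt_le, Rinv_0_lt_compat; lra].
    + apply (Rmult_le_reg_r (INR n)); [lra |].
      rewrite Rmult_assoc, Rinv_l; lra.
Qed.

Lemma BN_mono (N1 N2 : nat) (g h : pt -> R) (x : pt) : in_unit_square x ->
  (forall y, in_unit_square y -> g y <= h y) -> BN N1 N2 g x <= BN N1 N2 h x.
Proof.
  intros [Hx1 Hx2] Hgh. apply sum_Rle. intros j1 Hj1. apply sum_Rle. intros j2 Hj2.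
  apply Rmult_le_compat_l.
  - apply Rmult_le_pos; apply bern_ge_0; assumption.
  - apply Hgh. split; apply div_nat_in_unit_interval; assumption.
Qed.

Lemma convex_comb_in_unit_interval (l a b : R) :
  0 <= l <= 1 -> 0 <= a <= 1 -> 0 <= b <= 1 -> 0 <= (1 - l) * a + l * b <= 1.
Proof. intros. split; nra. Qed.

Lemma Amap_in_unit_square (kappa d : R) (N : nat) (y : pt) :
  0 <= d <= 1 -> 0 <= kappa / INR N <= 1 ->
  in_unit_square y -> in_unit_square (Amap kappa d N y).
Proof.
  intros Hd Hk [Hy1 Hy2]. unfold Amap. set (k := kappa / INR N) in *. split; simpl.
  - replace (fst y - k * (d * fst y - d * snd y))
      with ((1 - k * d) * fst y + k * d * snd y) by ring.
    apply convex_comb_in_unit_interval; [nra | assumption ..].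
  - replace (snd y - k * (- fst y + snd y)) with ((1 - k) * snd y + k * fst y) by ring.
    apply convex_comb_in_unit_interval; assumption.
Qed.

Lemma kernel_mono (kappa d : R) (N N2 : nat) (f g : pt -> R) (x : pt) :
  0 <= d <= 1 -> 0 <= kappa / INR N <= 1 -> in_unit_square x ->
  (forall z, in_unit_square z -> f z <= g z) ->
  kernel kappa d N N2 f x <= kernel kappa d N N2 g x.
Proof.
  intros Hd Hk Hx Hfg. apply BN_mono; [exact Hx |].
  intros y Hy. apply Hfg, Amap_in_unit_square; assumption.
Qed.

Lemma kernel_const (kappa d : R) (N N2 : nat) (c : R) (x : pt) :
  kernel kappa d N N2 (fun _ => c) x = c.
Proof. unfold kernel. apply BN_const. Qed.

Lemma sqnorm_psub_le (u v : pt) : sqnorm (psub u v) <= 2 * sqnorm u + 2 * sqnorm v.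
Proof.
  unfold sqnorm, psub. simpl.
  pose proof (pow2_ge_0 (fst u + fst v)). pose proof (pow2_ge_0 (snd u + snd v)). nra.
Qed.

(* [Amap Y - y = (Y - y) - (kappa/N) M Y], and [|M Y|^2 = (d^2 + 1) (Y1 - Y2)^2 <= 2]
   on the unit square. *)
Lemma Amap_sub_sqnorm_le (kappa d : R) (N : nat) (y Y : pt) :
  0 <= d <= 1 -> in_unit_square Y ->
  sqnorm (psub (Amap kappa d N Y) y) <= 2 * sqnorm (psub Y y) + 4 * (kappa / INR N) ^ 2.
Proof.
  intros Hd [HY1 HY2]. set (k := kappa / INR N).
  set (drift := (k * (d * fst Y - d * snd Y), k * (- fst Y + snd Y))).
  assert (Hdrift : sqnorm drift <= 2 * k ^ 2).
  { unfold sqnorm, drift. simpl.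
    assert (Hgap : (fst Y - snd Y) ^ 2 <= 1) by nra.
    replace ((k * (d * fst Y - d * snd Y)) ^ 2 + (k * (- fst Y + snd Y)) ^ 2)
      with (k ^ 2 * ((d ^ 2 + 1) * (fst Y - snd Y) ^ 2)) by ring.
    assert (Hd2 : d ^ 2 <= 1) by nra.
    assert (Hfactor : (d ^ 2 + 1) * (fst Y - snd Y) ^ 2 <= 2)
      by (pose proof (pow2_ge_0 (fst Y - snd Y)); nra).
    pose proof (Rmult_le_compat_l _ _ _ (pow2_ge_0 k) Hfactor). lra. }
  replace (psub (Amap kappa d N Y) y) with (psub (psub Y y) drift)
    by (unfold psub, Amap, drift, k; simpl; f_equal; ring).
  pose proof (sqnorm_psub_le (psub Y y) drift). lra.
Qed.

Lemma mul_one_sub_le_quarter (r : R) : r * (1 - r) <= / 4.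
Proof. pose proof (pow2_ge_0 (r - / 2)). nra. Qed.

Lemma kernel_sqdist_le (kappa d : R) (N N2 : nat) (y : pt) :
  0 < d <= 1 -> (1 <= N)%nat -> INR N2 = d * INR N -> in_unit_square y ->
  kernel kappa d N N2 (fun z => sqnorm (psub z y)) y
  <= ((1 + / d) / 2 + 4 * kappa ^ 2) / INR N.
Proof.
  intros Hd HN HN2 Hy.
  assert (HNpos : 1 <= INR N) by (apply (le_INR 1); exact HN).
  assert (HN2pos : (1 <= N2)%nat).
  { destruct N2; [simpl in HN2; nra | lia]. }
  unfold kernel.
  apply Rle_trans with (BN N N2 (fun Y => 2 * sqnorm (psub Y y) + 4 * (kappa / INR N) ^ 2 * 1) y).
  { apply BN_mono; [exact Hy |]. intros Y HY. rewrite Rmult_1_r.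
    apply Amap_sub_sqnorm_le; [lra | exact HY]. }
  rewrite BN_lin, BN_const, BN_sqdist by assumption. rewrite HN2.
  set (M := INR N) in *.
  assert (HinvM : 0 < / M) by (apply Rinv_0_lt_compat; lra).
  assert (Hvar1 : fst y * (1 - fst y) / M <= / 4 / M)
    by (apply Rmult_le_compat_r; [lra | apply mul_one_sub_le_quarter]).
  assert (Hvar2 : snd y * (1 - snd y) / (d * M) <= / 4 / (d * M)).
  { apply Rmult_le_compat_r; [| apply mul_one_sub_le_quarter].
    apply Rlt_le, Rinv_0_lt_compat, Rmult_lt_0_compat; lra. }
  assert (Hdrift : (kappa / M) ^ 2 <= kappa ^ 2 / M).
  { replace ((kappa / M) ^ 2) with (kappa ^ 2 / M * / M) by (field; lra).
    assert (HinvM1 : / M <= 1) by (rewrite <- Rinv_1; apply Rinv_le_contravar; lra).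
    assert (Hk : 0 <= kappa ^ 2 / M) by (apply Rmult_le_pos; [apply pow2_ge_0 | lra]).
    pose proof (Rmult_le_compat_l _ _ _ Hk HinvM1). lra. }
  replace (((1 + / d) / 2 + 4 * kappa ^ 2) / M)
    with (2 * (/ 4 / M + / 4 / (d * M)) + 4 * (kappa ^ 2 / M)) by (field; lra).
  lra.
Qed.

Lemma sqnorm_sub_lerp_le (s : R) (a b : pt) : 0 <= s <= 1 ->
  sqnorm (psub a (lerp s a b)) <= sqnorm (psub b a).
Proof.
  intros Hs. unfold sqnorm, psub, lerp. simpl.
  replace ((fst a - (fst a + s * (fst b - fst a))) ^ 2
           + (snd a - (snd a + s * (snd b - snd a))) ^ 2)
    with (s ^ 2 * ((fst b - fst a) ^ 2 + (snd b - snd a) ^ 2)) by ring.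
  assert (Hs2 : s ^ 2 <= 1) by nra.
  pose proof (pow2_ge_0 (fst b - fst a)). pose proof (pow2_ge_0 (snd b - snd a)). nra.
Qed.

Lemma nstep_weight_bounds (N : nat) (t : R) : 0 <= t ->
  0 <= (t - INR (nstep N t) / INR N) * INR N <= 1.
Proof.
  intros Ht. destruct (Nat.eq_dec N 0) as [-> | HN]; [simpl; lra |].
  assert (HNpos : 0 < INR N) by (apply lt_0_INR; lia).
  unfold nstep. destruct (base_Int_part (t * INR N)) as [Hlow Hhigh].
  set (z := Int_part (t * INR N)) in *.
  assert (Hz : (0 <= z)%Z).
  { assert (Hz1 : -1 < IZR z) by nra. apply lt_IZR in Hz1. lia. }
  rewrite INR_IZR_INZ, Z2Nat.id by exact Hz.
  replace ((t - IZR z / INR N) * INR N) with (t * INR N - IZR z) by (field; lra).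
  lra.
Qed.

Lemma Epath_last_step_le (K : (pt -> R) -> pt -> R) (P : pt -> Prop)
    (H : pt -> pt -> R) (B : R) :
  (forall g y, P y -> (forall z, P z -> g z <= B) -> K g y <= B) ->
  (forall y, P y -> K (H y) y <= B) ->
  forall n x0, P x0 -> Epath K (S n) (fun p => H (p n) (p (S n))) x0 <= B.
Proof.
  intros Kbound Hstep n. induction n as [| n IH]; intros x0 Hx0.
  - exact (Hstep x0 Hx0).
  - exact (Kbound _ x0 Hx0 IH).
Qed.

Theorem corollary1 :
  forall (d kappa : R), 0 < d <= 1 -> 0 < kappa ->
  exists C : R,
    forall (N N2 : nat) (x0 : pt) (t : R),
      (1 <= N)%nat ->
      INR N2 = d * INR N ->
      kappa * (1 / INR N) <= 1 ->
      0 <= fst x0 <= 1 -> 0 <= snd x0 <= 1 ->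
      0 <= t ->
      Epath (kernel kappa d N N2) (S (nstep N t))
        (fun p => sqnorm (fst (xbar N p t) - fst (xlin N p t),
                          snd (xbar N p t) - snd (xlin N p t))) x0
      <= C * / INR N.
Proof.
  intros d kappa Hd Hkappa. set (C := (1 + / d) / 2 + 4 * kappa ^ 2). exists C.
  intros N N2 x0 t HN HN2 Hk Hx1 Hx2 Ht.
  assert (Hd01 : 0 <= d <= 1) by lra.
  assert (Hk01 : 0 <= kappa / INR N <= 1).
  { assert (0 < INR N) by (apply lt_0_INR; lia).
    unfold Rdiv in *. rewrite Rmult_1_l in Hk.
    split; [apply Rmult_le_pos; [lra | apply Rlt_le, Rinv_0_lt_compat; lra] | exact Hk]. }
  pose proof (nstep_weight_bounds N t Ht) as Hs.
  set (n := nstep N t) in *. set (s := (t - INR n / INR N) * INR N) in *.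
  change (Epath (kernel kappa d N N2) (S n)
            (fun p => sqnorm (psub (p n) (lerp s (p n) (p (S n))))) x0 <= C / INR N).
  apply (Epath_last_step_le _ in_unit_square (fun a b => sqnorm (psub a (lerp s a b))));
    [| | split; assumption].
  - intros g y Hy Hg. rewrite <- (kernel_const kappa d N N2 (C / INR N) y).
    apply kernel_mono; assumption.
  - intros y Hy. eapply Rle_trans; [apply kernel_mono | apply kernel_sqdist_le]; try assumption.
    intros z _. apply sqnorm_sub_lerp_le, Hs.
Qed.
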